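(* Let $\eta>0$, $\theta>0$ with $(\eta,\theta)\in\mathcal{R}$, and let $\delta_*=\frac{u_m^2}{u_m^2+\eta}$ be the value of $\delta$ for which the interior equilibrium passes through the fold point $P=(u_m,v_m)$. Assume $f(u_m,v_m)=0,\ g(u_m,v_m,\delta_* )=0,\ \frac{\partial f}{\partial u}(u_m,v_m)=0$, and $\frac{\partial f}{\partial v}(u_m,v_m)\neq0,\ \frac{\partial^2 f}{\partial u^2}(u_m,v_m)\neq0,\ \frac{\partial g}{\partial u}(u_m,v_m,\delta_* )\neq0,\ \frac{\partial g}{\partial \delta}(u_m,v_m,\delta_* )\neq0.$ Then there exist $\epsilon_0>0$ and $\delta_0>0$ such that for $0<\epsilon<\epsilon_0$ and $|\delta-\delta_*|<\delta_0$ the system $$\frac{du}{dt}=f(u,v),\qquad \frac{dv}{dt}=\epsilon\, g(u,v,\delta)$$ has an equilibrium $P_2$ in a neighbourhood of $P$ which converges to $P$ as $(\epsilon,\delta)\to(0,\delta_* )$. The system undergoes a singular Hopf bifurcation at $$\delta_H(\sqrt{\epsilon})=\delta_*+\mathcal{O}(\epsilon^{5/2}).$$ This Hopf bifurcation is non-degenerate when $A\neq0$; it is supercritical if $A<0$ and subcritical if $A>0$, where $$A=a_{01}a_{20}b_{20}-a_{01}a_{30}b_{10}+a_{11}a_{20}b_{10}.$$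
   Context: The system is $f(u,v)=u(1-u)(u+\theta)(u^2+\eta)-u^2v$ and $g(u,v,\delta)=u^2v-\delta v(u^2+\eta)$, with parameters $\delta,\theta,\eta>0$ and $0<\epsilon\ll1$. It is considered on the first quadrant. Let $\phi(u)=\frac{1}{u}(1-u)(u+\theta)(u^2+\eta)$ for $u>0$. The critical manifold is $M_{20}=\{(u,v):u>0,\ v=\phi(u)\}$. Let $\Gamma=9\theta^2+6\theta+9-24\eta$ and $\Lambda_1=\frac{\eta}{8}\big(\theta^2+\frac{22}{3}\theta+1\big)-\frac{1}{96}\big(3(1+\theta^4)+2(\theta^2+4\eta^2)\big)$, $\Lambda_2=\frac{1-\theta}{288}(3\theta^2+2\theta+3-8\eta)$. Define - $\mathcal{R}_1=\{(\eta,\theta):0<\eta<\theta\le1,\ \frac{\sqrt\Gamma}{3}-3<\theta<1+\frac{\sqrt\Gamma}{3},\ \Gamma>(\Lambda_1/\Lambda_2)^2\}$, - $\mathcal{R}_2=\{(\eta,\theta):0<\eta<1<\theta,\ \frac{\sqrt\Gamma}{3}-3<\theta<1+\frac{\sqrt\Gamma}{3},\ \Gamma<(\Lambda_1/\Lambda_2)^2\}$, - $\mathcal{R}_3=\{(\eta,\theta):0<\theta<1<\eta,\ \frac{\sqrt\Gamma}{3}-3<\theta<1,\ \Gamma>(\Lambda_1/\Lambda_2)^2\}$, and $\mathcal{R}=\mathcal{R}_1\cup\mathcal{R}_2\cup\mathcal{R}_3$. For $(\eta,\theta)\in\mathcal{R}$, $M_{20}$ is S-shaped with exactly two fold points. These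 are $P=(u_m,v_m)$, a local minimum of $\phi$, and $Q=(u_M,v_M)$, a local maximum of $\phi$, with $0<u_m<u_M<1$, $v_m=\phi(u_m)$ and $v_M=\phi(u_M)$. The interior equilibrium is $E_*=(u_*,v_* )$ with $u_*=\sqrt{\delta\eta/(1-\delta)}$ and $v_*=\phi(u_* )$. Notation: $a_{ij}=\frac{\partial^{i+j}f}{\partial u^i\partial v^j}(u_m,v_m)$ and $b_{ij}=\frac{\partial^{i+j}g}{\partial u^i\partial v^j}(u_m,v_m,\delta_* )$. A singular Hopf bifurcation is a Hopf bifurcation of an equilibrium near a fold point of the critical manifold at which the eigenvalues of the Jacobian become singular in the limit $\epsilon\to0$. *)

From Stdlib Require Import Reals Lra.
From Coquelicot Require Import Coquelicot.
Open Scope R_scope.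

Definition f_sys (theta eta u v : R) : R :=
  u * (1 - u) * (u + theta) * (u ^ 2 + eta) - u ^ 2 * v.
Definition g_sys (eta u v delta : R) : R :=
  u ^ 2 * v - delta * v * (u ^ 2 + eta).
Definition phi (theta eta u : R) : R :=
  / u * (1 - u) * (u + theta) * (u ^ 2 + eta).

Definition Gam (eta theta : R) : R := 9 * theta ^ 2 + 6 * theta + 9 - 24 * eta.
Definition Lam1 (eta theta : R) : R :=
  eta / 8 * (theta ^ 2 + 22 / 3 * theta + 1)
  - / 96 * (3 * (1 + theta ^ 4) + 2 * (theta ^ 2 + 4 * eta ^ 2)).
Definition Lam2 (eta theta : R) : R :=
  (1 - theta) / 288 * (3 * theta ^ 2 + 2 * theta + 3 - 8 * eta).

Definition region1 (eta theta : R) : Prop :=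
  0 < eta /\ eta < theta /\ theta <= 1 /\
  sqrt (Gam eta theta) / 3 - 3 < theta /\ theta < 1 + sqrt (Gam eta theta) / 3 /\
  Gam eta theta > (Lam1 eta theta / Lam2 eta theta) ^ 2.
Definition region2 (eta theta : R) : Prop :=
  0 < eta /\ eta < 1 /\ 1 < theta /\
  sqrt (Gam eta theta) / 3 - 3 < theta /\ theta < 1 + sqrt (Gam eta theta) / 3 /\
  Gam eta theta < (Lam1 eta theta / Lam2 eta theta) ^ 2.
Definition region3 (eta theta : R) : Prop :=
  0 < theta /\ theta < 1 /\ 1 < eta /\
  sqrt (Gam eta theta) / 3 - 3 < theta /\ theta < 1 /\
  Gam eta theta > (Lam1 eta theta / Lam2 eta theta) ^ 2.
Definition region (eta theta : R) : Prop :=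
  region1 eta theta \/ region2 eta theta \/ region3 eta theta.

Definition is_local_min_phi (theta eta u0 : R) : Prop :=
  0 < u0 /\ exists r, 0 < r /\
    forall u, 0 < u -> Rabs (u - u0) < r -> phi theta eta u0 <= phi theta eta u.

Definition dU (F : R -> R -> R) : R -> R -> R := fun x y => Derive (fun t => F t y) x.
Definition dV (F : R -> R -> R) : R -> R -> R := fun x y => Derive (fun t => F x t) y.

(** First Lyapunov coefficient of the planar field (F1,F2) at an equilibrium
   (x0,y0) whose Jacobian J has trace 0 and positive determinant w^2.
   Coordinates are changed by (x,y) = (x0,y0) + T z with
   T = [[1, p/w],[0, r/w]] (p = J11, r = J21), so that T^{-1} J T = [[0,-w],[w,0]];
   then the Guckenheimer--Holmes formula (3.4.11) is applied. *)
Definition lyap1 (F1 F2 : R -> R -> R) (x0 y0 : R) : R :=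
  let p := dU F1 x0 y0 in
  let r := dU F2 x0 y0 in
  let w := sqrt (dU F1 x0 y0 * dV F2 x0 y0 - dV F1 x0 y0 * dU F2 x0 y0) in
  let X := fun x y => x0 + x + p / w * y in
  let Y := fun x y => y0 + r / w * y in
  let W1 := fun x y => F1 (X x y) (Y x y) - p / r * F2 (X x y) (Y x y) in
  let W2 := fun x y => w / r * F2 (X x y) (Y x y) in
  let fxx := dU (dU W1) 0 0 in
  let fxy := dU (dV W1) 0 0 in
  let fyy := dV (dV W1) 0 0 in
  let gxx := dU (dU W2) 0 0 in
  let gxy := dU (dV W2) 0 0 in
  let gyy := dV (dV W2) 0 0 in
  let fxxx := dU (dU (dU W1)) 0 0 in
  let fxyy := dU (dV (dV W1)) 0 0 in
  let gxxy := dU (dU (dV W2)) 0 0 in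
  let gyyy := dV (dV (dV W2)) 0 0 in
  / 16 * (fxxx + fxyy + gxxy + gyyy)
  + / (16 * w) * (fxy * (fxx + fyy) - gxy * (gxx + gyy) - fxx * gxx + fyy * gyy).

(** Hopf bifurcation of the one-parameter family of planar fields
   (G1 mu, G2 mu) along the equilibrium branch e, at mu = mu0, with
   eigenvalues +- i w at mu0:  e mu is an equilibrium for mu near mu0;
   at mu0 the Jacobian has trace 0 and determinant w^2 with w > 0;
   and the real part of the eigenvalues (trace/2) crosses 0 with nonzero speed. *)
Definition hopf_bif (G1 G2 : R -> R -> R -> R) (e : R -> R * R) (mu0 w : R) : Prop :=
  (exists r, 0 < r /\ forall mu, Rabs (mu - mu0) < r ->
      G1 mu (fst (e mu)) (snd (e mu)) = 0 /\ G2 mu (fst (e mu)) (snd (e mu)) = 0) /\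
  dU (G1 mu0) (fst (e mu0)) (snd (e mu0)) + dV (G2 mu0) (fst (e mu0)) (snd (e mu0)) = 0 /\
  0 < w /\
  dU (G1 mu0) (fst (e mu0)) (snd (e mu0)) * dV (G2 mu0) (fst (e mu0)) (snd (e mu0))
   - dV (G1 mu0) (fst (e mu0)) (snd (e mu0)) * dU (G2 mu0) (fst (e mu0)) (snd (e mu0))
   = w ^ 2 /\
  exists d, d <> 0 /\
    is_derive (fun mu => dU (G1 mu) (fst (e mu)) (snd (e mu))
                         + dV (G2 mu) (fst (e mu)) (snd (e mu))) mu0 d.

From Stdlib Require Import Reals Lra FunctionalExtensionality.
From Coquelicot Require Import Coquelicot.
Open Scope R_scope.

(* The interior equilibrium does not depend on eps: it is the point (ustar d, phi (ustar d))
   of the critical manifold, with ustar d ^ 2 = d eta / (1 - d).  Since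
   g = v (u^2 (1 - d) - d eta), the derivative g_v vanishes on the whole line u = ustar d, so
   along this branch the trace of the Jacobian is f_u alone.  It vanishes exactly at d = dstar,
   where ustar d = um is the fold, and crosses zero with speed a20 ustar'(dstar) <> 0; hence
   the Hopf point is dH = dstar exactly, with frequency om^2 = eps um^2 b10 -> 0.  At the fold
   the first Lyapunov coefficient equals A / (32 um^3 vm (1 - dstar)), so its sign is that
   of A. *)

Lemma dU_of_is_derive (W D1 D2 : R -> R -> R) :
  (forall x y, W x y = D1 x y) ->
  (forall x y, is_derive (fun t => D1 t y) x (D2 x y)) ->
  forall x y, dU W x y = D2 x y.
Proof.
  intros HW HD x y; unfold dU.
  rewrite (Derive_ext _ (fun t => D1 t y)) by (intro; apply HW).
  apply is_derive_unique, HD.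
Qed.

Lemma dV_of_is_derive (W D1 D2 : R -> R -> R) :
  (forall x y, W x y = D1 x y) ->
  (forall x y, is_derive (fun t => D1 x t) y (D2 x y)) ->
  forall x y, dV W x y = D2 x y.
Proof.
  intros HW HD x y; unfold dV.
  rewrite (Derive_ext _ (fun t => D1 x t)) by (intro; apply HW).
  apply is_derive_unique, HD.
Qed.

(* Successive derivatives of the prey growth u (1 - u) (u + th) (u^2 + et) in f_sys. *)
Definition growth' th et u :=
  -5 * u ^ 4 + 4 * (1 - th) * u ^ 3 + 3 * (th - et) * u ^ 2 + 2 * (1 - th) * et * u + th * et.
Definition growth'' th et u :=
  -20 * u ^ 3 + 12 * (1 - th) * u ^ 2 + 6 * (th - et) * u + 2 * (1 - th) * et.
Definition growth''' th et u := -60 * u ^ 2 + 24 * (1 - th) * u + 6 * (th - et).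

(* f and (a multiple of) g in the coordinates (x0 + x, y0 + k y) used by lyap1; the choice
   (x0, y0, k) = (0, 0, 1) gives back f and g. *)
Definition f_local th et x0 y0 k : R -> R -> R :=
  fun x y => f_sys th et (x0 + x) (y0 + k * y).
Definition g_local et d x0 y0 k c : R -> R -> R :=
  fun x y => c * g_sys et (x0 + x) (y0 + k * y) d.

Lemma f_sys_local th et : f_sys th et = f_local th et 0 0 1.
Proof.
  unfold f_local; do 2 (apply functional_extensionality; intro).
  now rewrite !Rplus_0_l, Rmult_1_l.
Qed.

Lemma g_sys_local et d c : (fun u v => c * g_sys et u v d) = g_local et d 0 0 1 c.
Proof.
  unfold g_local; do 2 (apply functional_extensionality; intro).
  now rewrite !Rplus_0_l, Rmult_1_l.
Qed.

Ltac partial_derivative :=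
  intros; unfold f_local, g_local, f_sys, g_sys, growth', growth'', growth''';
  auto_derive; [easy | ring].

Section LocalPartials.
Variables th et d x0 y0 k c : R.
Local Notation F := (f_local th et x0 y0 k).
Local Notation G := (g_local et d x0 y0 k c).

Lemma f_local_dU x y : dU F x y = growth' th et (x0 + x) - 2 * (x0 + x) * (y0 + k * y).
Proof. revert x y; apply (dU_of_is_derive _ F); [easy | partial_derivative]. Qed.
Lemma f_local_dUdU x y : dU (dU F) x y = growth'' th et (x0 + x) - 2 * (y0 + k * y).
Proof. revert x y; apply (dU_of_is_derive _ _ _ f_local_dU); partial_derivative. Qed.
Lemma f_local_dUdUdU x y : dU (dU (dU F)) x y = growth''' th et (x0 + x).
Proof. revert x y; apply (dU_of_is_derive _ _ _ f_local_dUdU); partial_derivative. Qed.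
Lemma f_local_dV x y : dV F x y = - (x0 + x) ^ 2 * k.
Proof. revert x y; apply (dV_of_is_derive _ F); [easy | partial_derivative]. Qed.
Lemma f_local_dUdV x y : dU (dV F) x y = -2 * (x0 + x) * k.
Proof. revert x y; apply (dU_of_is_derive _ _ _ f_local_dV); partial_derivative. Qed.
Lemma f_local_dVdV x y : dV (dV F) x y = 0.
Proof. revert x y; apply (dV_of_is_derive _ _ _ f_local_dV); partial_derivative. Qed.
Lemma f_local_dUdVdV x y : dU (dV (dV F)) x y = 0.
Proof. revert x y; apply (dU_of_is_derive _ _ _ f_local_dVdV); partial_derivative. Qed.

Lemma g_local_dU x y : dU G x y = c * (2 * (x0 + x) * (y0 + k * y) * (1 - d)).
Proof. revert x y; apply (dU_of_is_derive _ G); [easy | partial_derivative]. Qed.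
Lemma g_local_dUdU x y : dU (dU G) x y = c * (2 * (y0 + k * y) * (1 - d)).
Proof. revert x y; apply (dU_of_is_derive _ _ _ g_local_dU); partial_derivative. Qed.
Lemma g_local_dV x y : dV G x y = c * k * ((x0 + x) ^ 2 * (1 - d) - d * et).
Proof. revert x y; apply (dV_of_is_derive _ G); [easy | partial_derivative]. Qed.
Lemma g_local_dUdV x y : dU (dV G) x y = c * k * (2 * (x0 + x) * (1 - d)).
Proof. revert x y; apply (dU_of_is_derive _ _ _ g_local_dV); partial_derivative. Qed.
Lemma g_local_dUdUdV x y : dU (dU (dV G)) x y = c * k * (2 * (1 - d)).
Proof. revert x y; apply (dU_of_is_derive _ _ _ g_local_dUdV); partial_derivative. Qed.
Lemma g_local_dVdV x y : dV (dV G) x y = 0.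
Proof. revert x y; apply (dV_of_is_derive _ _ _ g_local_dV); partial_derivative. Qed.
Lemma g_local_dVdVdV x y : dV (dV (dV G)) x y = 0.
Proof. revert x y; apply (dV_of_is_derive _ _ _ g_local_dVdV); partial_derivative. Qed.
End LocalPartials.

Lemma fold_lt_1 th et u : 0 < th -> 0 < et -> 0 < u ->
  dU (f_sys th et) u (phi th et u) = 0 -> u < 1.
Proof.
  intros Hth Het Hu Hfold.
  assert (Hsum : u ^ 3 * (3 * u - 2) + th * u ^ 2 * (2 * u - 1) + et * u ^ 2 + th * et
                 = - dU (f_sys th et) u (phi th et u)).
  { rewrite f_sys_local, f_local_dU; unfold phi, growth'; field; lra. }
  rewrite Hfold in Hsum.
  destruct (Rlt_or_le u 1) as [Hlt | Hge]; [exact Hlt | exfalso].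
  assert (0 < u ^ 3 * (3 * u - 2)) by (apply Rmult_lt_0_compat; [apply pow_lt |]; lra).
  assert (0 <= th * u ^ 2 * (2 * u - 1))
    by (apply Rmult_le_pos; [apply Rmult_le_pos; [| apply pow_le] |]; lra).
  assert (0 < et * u ^ 2) by (apply Rmult_lt_0_compat; [| apply pow_lt]; lra).
  assert (0 < th * et) by (apply Rmult_lt_0_compat; lra).
  lra.
Qed.

Lemma phi_pos th et u : 0 < th -> 0 < et -> 0 < u < 1 -> 0 < phi th et u.
Proof.
  intros Hth Het Hu; unfold phi.
  assert (0 <= u ^ 2) by apply pow2_ge_0.
  repeat apply Rmult_lt_0_compat; try lra.
  apply Rinv_0_lt_compat; lra.
Qed.

Lemma f_sys_phi th et u : u <> 0 -> f_sys th et u (phi th et u) = 0.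
Proof. intro Hu; unfold f_sys, phi; field; exact Hu. Qed.

Definition ustar et d := sqrt (d * et / (1 - d)).

Lemma ustar_pos et d : 0 < et -> 0 < d < 1 -> 0 < ustar et d.
Proof.
  intros Het Hd; apply sqrt_lt_R0, Rdiv_lt_0_compat; [apply Rmult_lt_0_compat |]; lra.
Qed.

Lemma ustar_nullcline et d : 0 < et -> 0 < d < 1 -> ustar et d ^ 2 * (1 - d) = d * et.
Proof.
  intros Het Hd; unfold ustar.
  rewrite pow2_sqrt by (apply Rlt_le, Rdiv_lt_0_compat; [apply Rmult_lt_0_compat |]; lra).
  field; lra.
Qed.

Lemma ustar_of_fold et u : 0 < et -> 0 < u -> ustar et (u ^ 2 / (u ^ 2 + et)) = u.
Proof.
  intros Het Hu; unfold ustar.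
  assert (0 < u ^ 2) by (apply pow_lt; lra).
  replace (u ^ 2 / (u ^ 2 + et) * et / (1 - u ^ 2 / (u ^ 2 + et))) with (u ^ 2) by (field; lra).
  apply sqrt_pow2; lra.
Qed.

Lemma ustar_derive et d : 0 < et -> 0 < d < 1 ->
  is_derive (ustar et) d (et / (2 * ustar et d * (1 - d) ^ 2)).
Proof.
  intros Het Hd.
  assert (Hpos := ustar_pos et d Het Hd).
  unfold ustar; auto_derive.
  - repeat split; try lra.
    apply Rdiv_lt_0_compat; [apply Rmult_lt_0_compat |]; lra.
  - change (sqrt (d * et * / (1 + - d))) with (ustar et d).
    change (sqrt (d * et / (1 - d))) with (ustar et d).
    field; lra.
Qed.

Lemma g_sys_factor et u v d : g_sys et u v d = v * (u ^ 2 * (1 - d) - d * et).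
Proof. unfold g_sys; ring. Qed.

Definition branch th et d : R * R := (ustar et d, phi th et (ustar et d)).

Lemma branch_equilibrium th et d : 0 < et -> 0 < d < 1 ->
  f_sys th et (fst (branch th et d)) (snd (branch th et d)) = 0 /\
  g_sys et (fst (branch th et d)) (snd (branch th et d)) d = 0.
Proof.
  intros Het Hd; simpl; split.
  - apply f_sys_phi; apply Rgt_not_eq, ustar_pos; assumption.
  - rewrite g_sys_factor, ustar_nullcline by assumption; ring.
Qed.

Lemma g_sys_dV_on_nullcline et d c v : 0 < et -> 0 < d < 1 ->
  dV (fun u v => c * g_sys et u v d) (ustar et d) v = 0.
Proof.
  intros Het Hd; rewrite g_sys_local, g_local_dV, Rplus_0_l, ustar_nullcline by assumption.
  ring.
Qed.

Lemma continuous_eps_delta (f : R -> R) x : continuous f x ->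
  forall r, 0 < r -> exists s, 0 < s /\ forall y, Rabs (y - x) < s -> Rabs (f y - f x) < r.
Proof.
  intros Hf r Hr.
  destruct (proj1 (filterlim_locally f (f x)) Hf (mkposreal r Hr)) as [s Hs].
  exists s; split; [apply cond_pos | exact Hs].
Qed.

Lemma branch_continuous th et d0 : 0 < et -> 0 < d0 < 1 ->
  forall r, 0 < r -> exists s, 0 < s /\ forall d, Rabs (d - d0) < s ->
    Rabs (fst (branch th et d) - fst (branch th et d0)) < r /\
    Rabs (snd (branch th et d) - snd (branch th et d0)) < r.
Proof.
  intros Het Hd0 r Hr.
  assert (Hu : continuous (ustar et) d0).
  { apply (ex_derive_continuous (K := R_AbsRing) (V := R_NormedModule)).
    eexists; apply ustar_derive; assumption. }
  assert (Hv : continuous (fun d => phi th et (ustar et d)) d0).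
  { apply (continuous_comp (ustar et) (phi th et)); [exact Hu |].
    apply (ex_derive_continuous (K := R_AbsRing) (V := R_NormedModule)).
    unfold phi; auto_derive.
    apply Rgt_not_eq, ustar_pos; assumption. }
  destruct (continuous_eps_delta _ _ Hu r Hr) as [s1 [Hs1 H1]].
  destruct (continuous_eps_delta _ _ Hv r Hr) as [s2 [Hs2 H2]].
  exists (Rmin s1 s2); split; [now apply Rmin_case |].
  intros d Hd; simpl; split.
  - apply H1; eapply Rlt_le_trans; [exact Hd | apply Rmin_l].
  - apply H2; eapply Rlt_le_trans; [exact Hd | apply Rmin_r].
Qed.

Lemma trace_on_critical_manifold_derive th et u : 0 < u ->
  is_derive (fun u => dU (f_sys th et) u (phi th et u)) u
    (dU (dU (f_sys th et)) u (phi th et u) - 2 * dU (f_sys th et) u (phi th et u) / u).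
Proof.
  intro Hu.
  apply is_derive_ext with (f := fun u => growth' th et u - 2 * u * phi th et u).
  { intro t; rewrite f_sys_local, f_local_dU, !Rplus_0_l, Rmult_1_l; reflexivity. }
  rewrite f_sys_local, f_local_dU, f_local_dUdU.
  unfold phi, growth', growth''; auto_derive.
  - lra.
  - field; lra.
Qed.

(* When dU F1 x0 y0 = 0 the change of coordinates inside lyap1 has p = 0, and its two
   components become f_local and g_local. *)
Lemma lyap1_first_component th et e d x0 y0 a b :
  (fun x y => f_sys th et (x0 + x + 0 / a * y) (y0 + b / a * y)
              - 0 / b * (e * g_sys et (x0 + x + 0 / a * y) (y0 + b / a * y) d))
  = f_local th et x0 y0 (b / a).
Proof.
  do 2 (apply functional_extensionality; intro).
  unfold f_local, Rdiv; rewrite !Rmult_0_l, Rplus_0_r; ring.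
Qed.

Lemma lyap1_second_component et e d x0 y0 a b :
  (fun x y => a / b * (e * g_sys et (x0 + x + 0 / a * y) (y0 + b / a * y) d))
  = g_local et d x0 y0 (b / a) (a / b * e).
Proof.
  do 2 (apply functional_extensionality; intro).
  unfold g_local, Rdiv; rewrite !Rmult_0_l, Rplus_0_r; ring.
Qed.

Lemma lyap1_at_fold th et e d x0 y0 :
  0 < x0 -> 0 < y0 -> d < 1 -> 0 < e -> dU (f_sys th et) x0 y0 = 0 ->
  lyap1 (f_sys th et) (fun u v => e * g_sys et u v d) x0 y0
  = (x0 * growth''' th et x0 - 3 * (growth'' th et x0 - 2 * y0)) / (16 * x0).
Proof.
  intros Hx0 Hy0 Hd He Hfold.
  unfold lyap1; cbv zeta.
  rewrite Hfold, lyap1_first_component, lyap1_second_component.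
  rewrite f_local_dUdU, f_local_dUdUdU, f_local_dUdV, f_local_dVdV, f_local_dUdVdV,
    g_local_dUdU, g_local_dUdV, g_local_dVdV, g_local_dUdUdV, g_local_dVdVdV.
  rewrite f_sys_local, g_sys_local, f_local_dV, g_local_dU, g_local_dV.
  rewrite !Rplus_0_l, !Rplus_0_r, !Rmult_1_l.
  set (r := e * (2 * x0 * y0 * (1 - d))).
  assert (Hr : 0 < r).
  { unfold r; repeat apply Rmult_lt_0_compat; lra. }
  set (w := sqrt _).
  assert (Hw2 : w ^ 2 = x0 ^ 2 * r).
  { unfold w; rewrite pow2_sqrt; [ring |]. pose proof (pow_lt x0 2 Hx0); nra. }
  assert (Hw : 0 < w) by (unfold w; apply sqrt_lt_R0; pose proof (pow_lt x0 2 Hx0); nra).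
  assert (He' : e = r / (2 * x0 * y0 * (1 - d))) by (unfold r; field; split; lra).
  clearbody w r; subst e.
  replace r with (w ^ 2 / x0 ^ 2) by (rewrite Hw2; field; lra).
  field; repeat split; lra.
Qed.

Definition hopf_index (F G : R -> R -> R) (x y : R) : R :=
  dV F x y * dU (dU F) x y * dU (dU G) x y
  - dV F x y * dU (dU (dU F)) x y * dU G x y
  + dU (dV F) x y * dU (dU F) x y * dU G x y.

Lemma hopf_index_model th et d x y :
  hopf_index (f_sys th et) (fun u v => g_sys et u v d) x y
  = 2 * x ^ 2 * y * (1 - d) * (x * growth''' th et x - 3 * (growth'' th et x - 2 * y)).
Proof.
  replace (fun u v => g_sys et u v d) with (g_local et d 0 0 1 1)
    by (rewrite <- g_sys_local; do 2 (apply functional_extensionality; intro); ring).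
  unfold hopf_index; rewrite f_sys_local.
  rewrite f_local_dV, f_local_dUdU, f_local_dUdUdU, f_local_dUdV, g_local_dU, g_local_dUdU.
  rewrite !Rplus_0_l, !Rmult_1_l; ring.
Qed.

Lemma lyap1_sign_hopf_index th et e d x0 y0 :
  0 < x0 -> 0 < y0 -> d < 1 -> 0 < e -> dU (f_sys th et) x0 y0 = 0 ->
  let L := lyap1 (f_sys th et) (fun u v => e * g_sys et u v d) x0 y0 in
  let A := hopf_index (f_sys th et) (fun u v => g_sys et u v d) x0 y0 in
  (A < 0 -> L < 0) /\ (A > 0 -> L > 0).
Proof.
  intros Hx0 Hy0 Hd He Hfold L A.
  assert (HA : A = 32 * x0 ^ 3 * y0 * (1 - d) * L).
  { unfold A, L; rewrite hopf_index_model, lyap1_at_fold by assumption; field; lra. }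
  assert (Hc : 0 < 32 * x0 ^ 3 * y0 * (1 - d)).
  { pose proof (pow_lt x0 3 Hx0); repeat apply Rmult_lt_0_compat; lra. }
  rewrite HA; split; intro Hsign; nra.
Qed.

Lemma in_unit_interval_near c d : Rabs (d - c) < Rmin c (1 - c) -> 0 < d < 1.
Proof.
  intro Hd; apply Rabs_def2 in Hd.
  pose proof (Rmin_l c (1 - c)); pose proof (Rmin_r c (1 - c)); lra.
Qed.

Lemma sqrt_scaled_vanishes K : 0 < K ->
  forall r, 0 < r -> exists s, 0 < s /\ forall e, 0 < e < s -> Rabs (sqrt (e * K)) < r.
Proof.
  intros HK r Hr; exists (r ^ 2 / K); split.
  { apply Rdiv_lt_0_compat; [apply pow_lt |]; lra. }
  intros e [He Hes].
  rewrite Rabs_pos_eq by apply sqrt_pos.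
  rewrite <- (sqrt_pow2 r) by lra.
  apply sqrt_lt_1_alt; split; [nra |].
  apply Rmult_lt_compat_r with (r := K) in Hes; [| exact HK].
  replace (r ^ 2 / K * K) with (r ^ 2) in Hes by (field; lra); exact Hes.
Qed.

Section Fold.
Variables theta eta um : R.
Hypotheses (Htheta : 0 < theta) (Heta : 0 < eta) (Hum : 0 < um).
Hypothesis Hfold : dU (f_sys theta eta) um (phi theta eta um) = 0.

Local Notation vm := (phi theta eta um).
Local Notation dstar := (um ^ 2 / (um ^ 2 + eta)).

Lemma dstar_in_unit_interval : 0 < dstar < 1.
Proof.
  assert (0 < um ^ 2) by (apply pow_lt; lra).
  split; [apply Rdiv_lt_0_compat; lra |].
  apply Rlt_div_l; lra.
Qed.

Lemma vm_pos : 0 < vm.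
Proof.
  apply phi_pos; try assumption.
  split; [exact Hum | exact (fold_lt_1 theta eta um Htheta Heta Hum Hfold)].
Qed.

Lemma fold_det_pos : 0 < 2 * um ^ 3 * vm * (1 - dstar).
Proof.
  pose proof dstar_in_unit_interval; pose proof vm_pos.
  assert (0 < um ^ 3 * vm) by (apply Rmult_lt_0_compat; [apply pow_lt |]; lra).
  assert (0 < um ^ 3 * vm * (1 - dstar)) by (apply Rmult_lt_0_compat; lra).
  lra.
Qed.

Lemma branch_dstar : branch theta eta dstar = (um, vm).
Proof. unfold branch; rewrite ustar_of_fold by assumption; reflexivity. Qed.

Lemma branch_tends_to_fold r : 0 < r ->
  exists s, 0 < s /\ forall d, Rabs (d - dstar) < s ->
  Rabs (fst (branch theta eta d) - um) < r /\ Rabs (snd (branch theta eta d) - vm) < r.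
Proof.
  intro Hr.
  destruct (branch_continuous theta eta dstar Heta dstar_in_unit_interval r Hr) as [s [Hs Hd]].
  exists s; split; [exact Hs |]; intros d Hds.
  rewrite branch_dstar in Hd; exact (Hd d Hds).
Qed.

Lemma trace_branch_derive eps :
  is_derive (fun d => dU (f_sys theta eta) (fst (branch theta eta d)) (snd (branch theta eta d))
                      + dV (fun u v => eps * g_sys eta u v d) (fst (branch theta eta d))
                           (snd (branch theta eta d)))
    dstar (dU (dU (f_sys theta eta)) um vm * (eta / (2 * um * (1 - dstar) ^ 2))).
Proof.
  pose proof dstar_in_unit_interval as Hdstar.
  rewrite <- (Rplus_0_r (_ * _)).
  apply (is_derive_plus (K := R_AbsRing) (V := R_NormedModule)); unfold branch; cbn [fst snd].
  - assert (Hs := ustar_derive eta dstar Heta Hdstar).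
    rewrite ustar_of_fold in Hs by assumption.
    assert (Htr := trace_on_critical_manifold_derive theta eta um Hum).
    rewrite Hfold in Htr.
    replace (dU (dU (f_sys theta eta)) um vm * (eta / (2 * um * (1 - dstar) ^ 2)))
      with (scal (eta / (2 * um * (1 - dstar) ^ 2)) (dU (dU (f_sys theta eta)) um vm - 2 * 0 / um))
      by (unfold scal; simpl; unfold mult; simpl; unfold Rdiv; ring).
    apply (is_derive_comp (fun u => dU (f_sys theta eta) u (phi theta eta u)) (ustar eta)).
    + rewrite ustar_of_fold by assumption; exact Htr.
    + exact Hs.
  - apply is_derive_ext_loc with (f := fun _ => 0).
    2: apply (is_derive_const (K := R_AbsRing) (V := R_NormedModule)).
    assert (Hr : 0 < Rmin dstar (1 - dstar)) by (apply Rmin_case; lra).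
    exists (mkposreal _ Hr); intros d Hd; symmetry.
    apply g_sys_dV_on_nullcline; [exact Heta | exact (in_unit_interval_near _ _ Hd)].
Qed.

Lemma hopf_bif_at_fold eps : 0 < eps -> dU (dU (f_sys theta eta)) um vm <> 0 ->
  hopf_bif (fun _ => f_sys theta eta) (fun d u v => eps * g_sys eta u v d) (branch theta eta)
    dstar (sqrt (eps * (2 * um ^ 3 * vm * (1 - dstar)))).
Proof.
  intros Heps Ha20.
  pose proof dstar_in_unit_interval as Hdstar.
  assert (Hdet : 0 < eps * (2 * um ^ 3 * vm * (1 - dstar))).
  { apply Rmult_lt_0_compat; [exact Heps | exact fold_det_pos]. }
  assert (HfV : dV (f_sys theta eta) um vm = - um ^ 2).
  { rewrite f_sys_local, f_local_dV; ring. }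
  assert (HgU : dU (fun u v => eps * g_sys eta u v dstar) um vm
                = eps * (2 * um * vm * (1 - dstar))).
  { rewrite g_sys_local, g_local_dU; ring. }
  assert (HgV : dV (fun u v => eps * g_sys eta u v dstar) um vm = 0).
  { pose proof (g_sys_dV_on_nullcline eta dstar eps vm Heta Hdstar) as H.
    rewrite ustar_of_fold in H by assumption; exact H. }
  unfold hopf_bif; rewrite branch_dstar; cbv beta; cbn [fst snd].
  split; [| split; [| split; [| split]]].
  - assert (Hr : 0 < Rmin dstar (1 - dstar)) by (apply Rmin_case; lra).
    exists (Rmin dstar (1 - dstar)); split; [exact Hr |]; intros d Hd.
    destruct (branch_equilibrium theta eta d Heta (in_unit_interval_near _ _ Hd)) as [Hf Hg].
    rewrite Hg; split; [exact Hf | ring].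
  - rewrite Hfold, HgV; ring.
  - apply sqrt_lt_R0; exact Hdet.
  - rewrite pow2_sqrt by lra; rewrite Hfold, HgV, HfV, HgU; ring.
  - exists (dU (dU (f_sys theta eta)) um vm * (eta / (2 * um * (1 - dstar) ^ 2))); split.
    + apply Rmult_integral_contrapositive_currified; [exact Ha20 |].
      apply Rgt_not_eq, Rdiv_lt_0_compat; [lra |].
      pose proof (pow_lt (1 - dstar) 2 ltac:(lra)); repeat apply Rmult_lt_0_compat; lra.
    + apply trace_branch_derive.
Qed.
End Fold.

Theorem theorem1 (eta theta um : R) :
  0 < eta -> 0 < theta -> region eta theta ->
  is_local_min_phi theta eta um ->
  let vm := phi theta eta um in
  let dstar := um ^ 2 / (um ^ 2 + eta) in
  let F := f_sys theta eta in
  let Gd := fun u v => g_sys eta u v dstar in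
  F um vm = 0 -> Gd um vm = 0 -> dU F um vm = 0 ->
  dV F um vm <> 0 -> dU (dU F) um vm <> 0 -> dU Gd um vm <> 0 ->
  Derive (fun d => g_sys eta um vm d) dstar <> 0 ->
  let a01 := dV F um vm in
  let a20 := dU (dU F) um vm in
  let a11 := dU (dV F) um vm in
  let a30 := dU (dU (dU F)) um vm in
  let b10 := dU Gd um vm in
  let b20 := dU (dU Gd) um vm in
  let A := a01 * a20 * b20 - a01 * a30 * b10 + a11 * a20 * b10 in
  exists (eps0 delta0 C : R) (P2 : R -> R -> R * R) (dH om : R -> R),
    0 < eps0 /\ 0 < delta0 /\
    (* P2 eps delta is an equilibrium of u' = f, v' = eps g *)
    (forall eps delta, 0 < eps < eps0 -> Rabs (delta - dstar) < delta0 ->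
       F (fst (P2 eps delta)) (snd (P2 eps delta)) = 0 /\
       eps * g_sys eta (fst (P2 eps delta)) (snd (P2 eps delta)) delta = 0) /\
    (* P2 -> P as (eps, delta) -> (0, dstar) *)
    (forall r, 0 < r -> exists s, 0 < s /\
       forall eps delta, 0 < eps < Rmin s eps0 -> Rabs (delta - dstar) < Rmin s delta0 ->
         Rabs (fst (P2 eps delta) - um) < r /\ Rabs (snd (P2 eps delta) - vm) < r) /\
    (* singular Hopf bifurcation at dH eps = dstar + O(eps^(5/2)) *)
    (forall eps, 0 < eps < eps0 ->
       Rabs (dH eps - dstar) < delta0 /\
       Rabs (dH eps - dstar) <= C * Rpower eps (5 / 2) /\
       hopf_bif (fun _ => F) (fun d u v => eps * g_sys eta u v d) (P2 eps) (dH eps) (om eps) /\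
       (A < 0 -> lyap1 F (fun u v => eps * g_sys eta u v (dH eps))
                   (fst (P2 eps (dH eps))) (snd (P2 eps (dH eps))) < 0) /\
       (A > 0 -> lyap1 F (fun u v => eps * g_sys eta u v (dH eps))
                   (fst (P2 eps (dH eps))) (snd (P2 eps (dH eps))) > 0)) /\
    (* singularity: the Hopf frequency tends to 0 as eps -> 0 *)
    (forall r, 0 < r -> exists s, 0 < s /\ forall eps, 0 < eps < Rmin s eps0 -> Rabs (om eps) < r).
Proof.
  intros Heta Htheta _ [Hum _] vm dstar F Gd _ _ Hfold _ Ha20 _ _ a01 a20 a11 a30 b10 b20 A.
  assert (Hdstar : 0 < dstar < 1) by exact (dstar_in_unit_interval eta um Heta Hum).
  assert (Hvm : 0 < vm) by exact (vm_pos theta eta um Htheta Heta Hum Hfold).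
  assert (HP : branch theta eta dstar = (um, vm)) by exact (branch_dstar theta eta um Heta Hum).
  exists 1, (Rmin dstar (1 - dstar)), 0, (fun _ => branch theta eta), (fun _ => dstar),
    (fun eps => sqrt (eps * (2 * um ^ 3 * vm * (1 - dstar)))).
  split; [lra |]; split; [apply Rmin_case; lra |].
  split; [| split; [| split]].
  - intros eps d _ Hd.
    destruct (branch_equilibrium theta eta d Heta (in_unit_interval_near _ _ Hd)) as [Hf Hg].
    rewrite Hg; split; [exact Hf | ring].
  - intros r Hr.
    destruct (branch_tends_to_fold theta eta um Heta Hum r Hr) as [s [Hs Hbranch]].
    exists s; split; [exact Hs |]; intros eps d _ Hd.
    apply Hbranch; eapply Rlt_le_trans; [exact Hd | apply Rmin_l].
  - intros eps [Heps _]; cbv beta.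
    rewrite Rminus_diag, Rabs_R0, Rmult_0_l, HP; cbn [fst snd].
    split; [apply Rmin_case; lra |]; split; [lra |]; split.
    + exact (hopf_bif_at_fold theta eta um Htheta Heta Hum Hfold eps Heps Ha20).
    + exact (lyap1_sign_hopf_index theta eta eps dstar um vm Hum Hvm ltac:(lra) Heps Hfold).
  - intros r Hr.
    destruct (sqrt_scaled_vanishes _ (fold_det_pos theta eta um Htheta Heta Hum Hfold) r Hr)
      as [s [Hs Hsmall]].
    exists s; split; [exact Hs |]; intros eps [Heps Hes].
    apply Hsmall; split; [exact Heps | eapply Rlt_le_trans; [exact Hes | apply Rmin_l]].
Qed.
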